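(* Let $\{G_\sigma:\sigma>0\}$ be a scale family, $G=G_1$, $\ell$ a loss function whose induced divergence $d$ is symmetric and rescalable with scaling function $h$. Let $\sigma_{\mathrm{test}}>0$ be a random variable that is not almost surely constant, such that $\sigma_{\mathrm{test}}$ and $1/\sigma_{\mathrm{test}}$ have the same distribution, and such that $\mathbb{E}\,\ell(G_\sigma,G_{\sigma_{\mathrm{test}}})$ is finite for all $\sigma>0$. Define $f(\sigma)=d(G_\sigma,G)$. Assume $f$ and $h$ are differentiable on $(0,\infty)$, $f(\sigma)>0$ for $\sigma\neq1$, the function $(h-1)/f$ is differentiable on $(1,\infty)$, and the function $\sigma\mapsto\mathbb{E}\,d(G_\sigma,G_{\sigma_{\mathrm{test}}})$ is differentiable at $\sigma=1$ with derivative equal to $\mathbb{E}\big[\tfrac{\partial}{\partial\sigma}d(G_\sigma,G_{\sigma_{\mathrm{test}}})\big|_{\sigma=1}\big]$ (this holds, e.g., if $\sigma_{\mathrm{test}}$ has a compactly supported density on $(0,\infty)$ and $f'$ is continuous). Then: (i) if $((h-1)/f)'>0$ on $(1,\infty)$, there exists $\sigma^*<1$ with $\mathbb{E}\,\ell(G_{\sigma^*},G_{\sigma_{\mathrm{test}}})<\mathbb{E}\,\ell(G,G_{\sigma_{\mathrm{test}}})$; (ii) if $((h-1)/f)'<0$ on $(1,\infty)$, there exists $\sigma^*>1$ with $\mathbb{E}\,\ell(G_{\sigma^*},G_{\sigma_{\mathrm{test}}})<\mathbb{E}\,\ell(G,G_{\sigma_{\mathrm{test}}})$.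
   Context: Expected loss $\ell(F,G)=\mathbb{E}\,\ell(F,Y)$ for $Y\sim G$; induced divergence $d(F,G)=\ell(F,G)-\ell(G,G)$. Scale family: if $Y\sim G_1$, $G_\sigma$ is the law of $\sigma Y$. $d$ is symmetric if $d(F,G)=d(G,F)$ for all $F,G$; it is rescalable with scaling function $h:(0,\infty)\to(0,\infty)$ if $d(F_\sigma,G_\tau)=h(\tau)\,d(F_{\sigma/\tau},G_1)$ for all $\sigma,\tau>0$ and all scale families $\{F_\sigma\},\{G_\sigma\}$. Here $\mathbb{E}\,\ell(F,G_{\sigma_{\mathrm{test}}})$ denotes the expectation over $\sigma_{\mathrm{test}}$ of the expected loss $\ell(F,G_{\sigma_{\mathrm{test}}})$. *)

From HB Require Import structures.
From mathcomp Require Import all_boot all_order all_algebra.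
From mathcomp Require Import all_classical all_reals all_analysis.
Set Implicit Arguments. Unset Strict Implicit. Unset Printing Implicit Defensive.
Import Order.TTheory GRing.Theory Num.Theory.
Import numFieldNormedType.Exports.
Local Open Scope classical_set_scope.
Local Open Scope ring_scope.

(* A (predictive) distribution on the real line is represented by its
   underlying set function [set R -> \bar R] (a probability measure on the
   Borel sets of R). *)
Notation dist R := (set R -> \bar R).

Definition scale {R : realType} (G : dist R) (s : R) : dist R :=
  pushforward G (fun y : R => s * y).

Definition eloss {R : realType} (l : dist R -> R -> R) (F G : dist R) : R :=
  fine (\int[G]_(y in [set: R]) (l F y)%:E)%E.

Definition divg {R : realType} (l : dist R -> R -> R) (F G : dist R) : R :=
  eloss l F G - eloss l G G.

Definition loss_domain {R : realType} (D : set (dist R)) (l : dist R -> R -> R)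
  : Prop :=
  [/\ (forall F, D F -> exists Q : probability R R, F = (Q : set R -> \bar R)),
      (forall F s, D F -> 0 < s -> D (scale F s)) &
      (forall F G, D F -> D G -> G.-integrable [set: R] (fun y => (l F y)%:E))].

Definition div_symmetric {R : realType} (D : set (dist R)) (l : dist R -> R -> R)
  : Prop :=
  forall F G, D F -> D G -> divg l F G = divg l G F.

Definition div_rescalable {R : realType} (D : set (dist R)) (l : dist R -> R -> R)
  (h : R -> R) : Prop :=
  (forall t, 0 < t -> 0 < h t) /\
  forall F G s t, D F -> D G -> 0 < s -> 0 < t ->
    divg l (scale F s) (scale G t) = h t * divg l (scale F (s / t)) G.

(** By rescalability [d(G_s, G_t) = h(t) f(s/t)], and symmetry turns this into
    the reciprocity relation [f(s) = h(s) f(1/s)].  Differentiating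
    [s |-> E d(G_s, G_X)] at [s = 1] therefore gives [E g(X)] with
    [g(t) = h(t) f'(1/t) / t].  Since [X] and [1/X] have the same law,
    [E g(X) = E (g(X) + g(1/X)) / 2], and differentiating the reciprocity
    relation shows that for [x > 1] the integrand equals
    [x f(x)^2 / h(x) * ((h - 1)/f)'(x)]; it vanishes at [x = 1].  As [X] is not
    a.s. constant, the derivative at [1] is nonzero with the sign of
    [((h - 1)/f)'], so moving [s] slightly against it lowers the expected
    divergence, and the expected loss differs from the expected divergence by
    the term [E l(G_X, G_X)], which does not depend on [s]. *)

From HB Require Import structures.
From mathcomp Require Import all_boot all_order all_algebra.
From mathcomp Require Import all_classical all_reals all_analysis.
From mathcomp Require Import measurable_realfun ring lra.
Set Implicit Arguments. Unset Strict Implicit. Unset Printing Implicit Defensive.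
Import Order.TTheory GRing.Theory Num.Theory.
Import numFieldNormedType.Exports.
Local Open Scope classical_set_scope.
Local Open Scope ring_scope.

Section RealAnalysis.
Variable R : realType.
Implicit Types (F f h k : R -> R) (c t x : R).

Let scaleRE (a b : R) : a *: b = a * b. Proof. by []. Qed.

Lemma harmonic_cvg_dnbhs0 : harmonic @ \oo --> (0 : R)^'.
Proof.
move=> A A0.
have : \forall n \near \oo, (fun y : R => y != 0 -> A y) (harmonic n).
  exact: cvg_harmonic A0.
by apply: filterS => n /= An; apply: An; rewrite invr_eq0 pnatr_eq0.
Qed.

Lemma derive1_seq_cvg F x : derivable F x 1 ->
  (fun n : nat => (F (x + n.+1%:R^-1) - F x) * n.+1%:R) @ \oo --> derive1 F x.
Proof.
move=> dF; rewrite derive1E.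
apply: cvg_trans (cvg_comp _ _ harmonic_cvg_dnbhs0 dF).
apply: near_eq_cvg; near=> n.
by rewrite /= invrK scaler1 [_ + x]addrC mulrC.
Unshelve. all: by end_near. Qed.

Lemma derivable1_continuous F x : derivable F x 1 -> {for x, continuous F}.
Proof. by move=> dF; apply/differentiable_continuous/derivable1_diffP. Qed.

Lemma continuous_measurable_pos k :
  (forall x, 0 < x -> {for x, continuous k}) -> measurable_fun (`]0, +oo[ : set R) k.
Proof.
move=> ck; apply: open_continuous_measurable_fun; first exact: interval_open.
by move=> x; rewrite inE /= in_itv /= andbT; exact: ck.
Qed.

(* derive1 F is the pointwise limit of measurable difference quotients. *)
Lemma measurable_derive1_pos F : (forall x, 0 < x -> derivable F x 1) ->
  measurable_fun (`]0, +oo[ : set R) (derive1 F).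
Proof.
move=> dF; apply: (@measurable_fun_cvg _ R R _
  (fun n x => (F (x + n.+1%:R^-1) - F x) * n.+1%:R)).
- move=> n; apply: continuous_measurable_pos => x x0.
  apply: cvgM; last exact: cvg_cst.
  apply: cvgB; last exact: derivable1_continuous (dF _ x0).
  apply: continuous_comp; first by apply: cvgD; [exact: cvg_id|exact: cvg_cst].
  by apply/derivable1_continuous/dF; rewrite addr_gt0 // harmonic_gt0.
- by move=> x; rewrite /= in_itv /= andbT => x0; exact/derive1_seq_cvg/dF.
Qed.

Lemma near_gt0 x : 0 < x -> \forall y \near x, 0 < y.
Proof. by move=> x0; exact: (cvgr_gt _ cvg_id). Qed.

Lemma derive1_quotient_cvg F x : derivable F x 1 ->
  (fun t => t^-1 * (F (t + x) - F x)) @ 0^' --> derive1 F x.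
Proof.
move=> dF; rewrite derive1E; apply: cvg_trans dF; apply: near_eq_cvg.
by near=> t; rewrite /= scaler1.
Unshelve. all: by end_near. Qed.

Lemma derive1_gt0_descent F x : derivable F x 1 -> 0 < derive1 F x ->
  exists y, [/\ x - 1 < y, y < x & F y < F x].
Proof.
move=> dF d0; have /cvgr_gt/(_ _ d0)/nbhs_ballP[e /= e0 He] := derive1_quotient_cvg dF.
pose m := Num.min e 1.
have m0 : 0 < m by rewrite lt_min e0 ltr01.
have me : m <= e by rewrite ge_min lexx.
have m1 : m <= 1 by rewrite ge_min lexx orbT.
have := He (- (m / 2)); rewrite /ball /= sub0r opprK ger0_norm ?divr_ge0 ?ltW //.
have mn0 : - (m / 2) != 0 by rewrite oppr_eq0 gt_eqF // divr_gt0.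
move=> /(_ _ mn0); rewrite nmulr_rgt0 ?subr_lt0;
  last by rewrite invr_lt0 oppr_lt0 divr_gt0.
by move=> lt; exists (- (m / 2) + x); split => //; lra.
Qed.

Lemma derive1_lt0_descent F x : derivable F x 1 -> derive1 F x < 0 ->
  exists y, x < y /\ F y < F x.
Proof.
move=> dF d0; have /cvgr_lt/(_ _ d0)/nbhs_ballP[e /= e0 He] := derive1_quotient_cvg dF.
have := He (e / 2); rewrite /ball /= sub0r normrN ger0_norm ?divr_ge0 ?ltW //.
have en0 : e / 2 != 0 by rewrite gt_eqF // divr_gt0.
move=> /(_ _ en0); rewrite pmulr_rlt0 ?subr_lt0; last by rewrite invr_gt0 divr_gt0.
by move=> lt; exists (e / 2 + x); split => //; lra.
Qed.

Lemma derive1_ratio_subr1 f h x : f x != 0 -> derivable f x 1 -> derivable h x 1 ->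
  derive1 (fun y => (h y - 1) / f y) x =
  derive1 h x / f x - (h x - 1) * derive1 f x / f x ^+ 2.
Proof.
move=> fx0 df dh; have d1 := @derivable_cst _ R^o R^o 1 x 1.
rewrite -[fun y => _]/((h - cst 1) * (fun y => (f y)^-1)) derive1E.
rewrite (deriveM (derivableB dh d1) (derivableV fx0 df)) (deriveV fx0 df).
have hB : (h - cst 1) x = h x - 1 by [].
by rewrite (deriveB dh d1) derive_cst -!derive1E subr0 hB !scaleRE; field.
Qed.

Lemma derivable_divr t x : derivable (fun s : R => s / t) x 1.
Proof. by apply: derivableM. Qed.

Lemma derive1_divr t x : derive1 (fun s : R => s / t) x = t^-1.
Proof. by rewrite (derive1Mr (f := id)) ?derive1_id ?mul1r //; exact: derivable_id. Qed.

Lemma derive1_scaled_at1 k f c t : 0 < t ->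
  (forall s, 0 < s -> k s = c * f (s / t)) -> derivable f t^-1 1 ->
  derive1 k 1 = c * derive1 f t^-1 / t.
Proof.
move=> t0 kE df.
have dl : derivable (fun s : R => s / t) 1 1 := @derivable_divr t 1.
have df1 : derivable f (1 / t) 1 by rewrite div1r.
rewrite derive1E
  (@near_eq_derive R R^o R^o _ (fun s => c * (f \o (fun s : R => s / t)) s));
  last by near=> s; rewrite kE //; near: s; exact: near_gt0.
rewrite -derive1E (derive1Ml (f := f \o (fun s : R => s / t))).
  by rewrite (derive1_comp dl df1) derive1_divr div1r mulrA.
apply/derivable1_diffP; apply: differentiable_comp; apply/derivable1_diffP.
  exact: dl.
exact: df1.
Unshelve. all: by end_near. Qed.

Lemma derivable_inv x : x != 0 -> derivable (fun y : R => y^-1) x 1.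
Proof. by move=> x0; apply: (@derivableV _ _ id). Qed.

Lemma derive1_inv x : x != 0 -> derive1 (fun y : R => y^-1) x = - x ^- 2.
Proof. by move=> x0; rewrite derive1E (@deriveV _ _ id) // derive_id scaleRE mulr1. Qed.

Lemma derive1_mulV h f x : x != 0 -> derivable h x 1 -> derivable f x^-1 1 ->
  derive1 (fun y => h y * f y^-1) x =
  derive1 h x * f x^-1 - h x * derive1 f x^-1 * x ^- 2.
Proof.
move=> xn0 dh dfi.
have dinv : derivable (fun y : R => y^-1) x 1 := derivable_inv xn0.
have dfinv : derivable (f \o (fun y => y^-1)) x 1.
  apply/derivable1_diffP; apply: differentiable_comp; apply/derivable1_diffP.
    exact: dinv.
  exact: dfi.
rewrite -[fun y => _]/(h * (f \o (fun y => y^-1))) derive1E (deriveM dh dfinv).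
rewrite -derive1E -(derive1E h) (derive1_comp dinv dfi) derive1_inv //.
by rewrite !scaleRE !mulrN mulrA addrC [f x^-1 * _]mulrC.
Qed.

End RealAnalysis.

Section ScaleReciprocity.
Variables (R : realType) (f h : R -> R).
Hypothesis f_recip : forall s, 0 < s -> f s = h s * f s^-1.
Hypothesis df : forall x, 0 < x -> derivable f x 1.
Hypothesis dh : forall x, 0 < x -> derivable h x 1.
Hypothesis f_gt0 : forall s, 0 < s -> s != 1 -> 0 < f s.
Hypothesis h_gt0 : forall s, 0 < s -> 0 < h s.

(* [unit_slope t] is the derivative at [s = 1] of [s |-> h t * f (s / t)]. *)
Definition unit_slope (t : R) : R := h t * derive1 f t^-1 / t.

Lemma derive1_recip x : 0 < x ->
  derive1 f x = derive1 h x * f x^-1 - h x * derive1 f x^-1 * x ^- 2.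
Proof.
move=> x0; have dfi : derivable f x^-1 1 by apply: df; rewrite invr_gt0.
rewrite -(derive1_mulV (lt0r_neq0 x0) (dh x0) dfi) !derive1E; apply: near_eq_derive.
by near=> s; rewrite f_recip //; near: s; exact: near_gt0.
Unshelve. all: by end_near. Qed.

Lemma unit_slope_recip_sum x : 0 < x -> f x != 0 -> h x != 0 ->
  unit_slope x + unit_slope x^-1 =
  x / h x * f x ^+ 2 * derive1 (fun y => (h y - 1) / f y) x.
Proof.
move=> x0 fx0 hx0; have xn0 : x != 0 by rewrite gt_eqF.
have xi0 : 0 < x^-1 by rewrite invr_gt0.
rewrite (derive1_ratio_subr1 fx0 (df x0) (dh x0)) /unit_slope invrK.
have := derive1_recip x0; have := f_recip x0; have := f_recip xi0; rewrite invrK.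
move: (f x^-1) (h x^-1) (derive1 f x) (derive1 f x^-1) (derive1 h x).
move=> fi hi d di dh' fxE fiE dE.
have {}fiE : fi = f x / h x by rewrite fiE; field.
have hiE : hi = (h x)^-1.
  by apply: (@mulIf _ (f x)) => //; rewrite -fxE fiE; field.
have diE : di = (dh' * fi - d) * x ^+ 2 / h x by rewrite dE; field; rewrite hx0 xn0.
by rewrite diE hiE fiE; field; rewrite hx0 xn0 fx0.
Qed.

Lemma unit_slope_recip_sum_pmul x : 1 < x -> exists2 c, 0 < c &
  unit_slope x + unit_slope x^-1 = c * derive1 (fun y => (h y - 1) / f y) x.
Proof.
move=> x1; have x0 : 0 < x by apply: lt_trans x1.
have fx0 : 0 < f x by rewrite f_gt0 // gt_eqF.
exists (x / h x * f x ^+ 2); first by rewrite mulr_gt0 ?divr_gt0 ?h_gt0 ?exprn_gt0.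
by rewrite unit_slope_recip_sum // gt_eqF ?h_gt0.
Qed.

Lemma unit_slope1 : f 1 = 0 -> unit_slope 1 = 0.
Proof.
move=> f1; rewrite /unit_slope invr1.
have [| |t|_ f'1] := @derive1_at_min R f 0 2 1 (ler0n _ 2).
- by move=> t; rewrite in_itv /= => /andP[t0 _]; exact: df.
- by rewrite in_itv /= ltr01 ltr1n.
- rewrite in_itv /= f1 => /andP[t0 _].
  by have [->|t1] := eqVneq t 1; [rewrite f1|exact/ltW/f_gt0].
- by rewrite derive1E f'1 mulr0 mul0r.
Qed.

Lemma measurable_unit_slope : measurable_fun (`]0, +oo[ : set R) unit_slope.
Proof.
have minv : measurable_fun (`]0, +oo[ : set R) (fun y : R => y^-1).
  by apply: continuous_measurable_pos => x x0; apply: inv_continuous; rewrite gt_eqF.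
apply: measurable_funM => //; apply: measurable_funM.
  by apply: continuous_measurable_pos => x x0; exact/derivable1_continuous/dh.
apply: (@measurable_comp _ _ _ _ _ _ (`]0, +oo[ : set R)) => //.
- by move=> _ [y /= y0 <-]; move: y0; rewrite /= !in_itv /= !andbT invr_gt0.
- exact: measurable_derive1_pos.
Qed.

End ScaleReciprocity.

Section IntegralInLaw.
Context (R : realType) (d : measure_display) (T : measurableType d).
Variables (mu : {measure set T -> \bar R}) (X Y : T -> R).
Hypotheses (mX : measurable_fun setT X) (mY : measurable_fun setT Y).
Hypothesis XY_law : forall A, measurable A -> mu (X @^-1` A) = mu (Y @^-1` A).

Lemma integral_eq_in_law (phi : R -> R) : measurable_fun setT phi ->
  mu.-integrable setT (fun w => (phi (X w))%:E) ->
  mu.-integrable setT (fun w => (phi (Y w))%:E) /\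
  (\int[mu]_(w in setT) (phi (X w))%:E = \int[mu]_(w in setT) (phi (Y w))%:E)%E.
Proof.
move=> mphi iX.
have lawE (F : (R -> \bar R)) : (\int[pushforward mu X]_(y in setT) F y =
    \int[pushforward mu Y]_(y in setT) F y)%E.
  by apply: eq_measure_integral => A mA _; exact: XY_law.
have mE : measurable_fun setT (EFin \o phi) by exact/measurable_EFinP.
have mEa : measurable_fun setT (fun y => `|(EFin \o phi) y|)%E by exact: measurableT_comp.
have absX := ge0_integral_pushforward mX mu measurableT mEa (fun _ _ => abse_ge0 _).
have absY := ge0_integral_pushforward mY mu measurableT mEa (fun _ _ => abse_ge0 _).
rewrite preimage_setT in absX; rewrite preimage_setT in absY.
have iY : mu.-integrable setT (fun w => (phi (Y w))%:E).
  apply/integrableP; split; first exact/measurable_EFinP/measurableT_comp.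
  by move/integrableP: iX => [_]; rewrite -absX -absY lawE.
split => //.
have eX := integral_pushforward (mu := mu) (D := setT) mX mE.
have eY := integral_pushforward (mu := mu) (D := setT) mY mE.
rewrite preimage_setT in eX; rewrite preimage_setT in eY.
by rewrite -(eX iX measurableT) -(eY iY measurableT) lawE.
Qed.

End IntegralInLaw.

Section ReciprocalLaw.
Context (R : realType) (d : measure_display) (Omega : measurableType d).
Variables (P : probability Omega R) (X : Omega -> R).
Hypothesis mX : measurable_fun setT X.
Hypothesis X_gt0 : forall w, 0 < X w.
Hypothesis X_nonconst : ~ (exists c : R, P (X @^-1` [set c]) = 1%E).
Hypothesis X_law_inv : forall A : set R, measurable A ->
  P (X @^-1` A) = P ((fun w => (X w)^-1) @^-1` A).

Lemma Rintegral_gt0_off_level (psi : Omega -> R) (c : R) :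
  P.-integrable setT (fun w => (psi w)%:E) -> (forall w, 0 <= psi w) ->
  (forall w, X w != c -> 0 < psi w) -> 0 < \int[P]_w psi w.
Proof.
move=> ipsi psi_ge0 psi_gt0; apply: fine_gt0.
rewrite integrable_lty // andbT lt_neqAle integral_ge0 ?andbT;
  last by move=> w _; rewrite lee_fin.
apply/negP => /eqP int0.
have : ae_eq P setT (fun w => (psi w)%:E) (cst 0%E).
  apply/(ae_eq_integral_abs P measurableT (measurable_int _ ipsi)).
  by rewrite [RHS]int0; apply: eq_integral => w _; rewrite gee0_abs // lee_fin.
move=> [N [mN PN0 sN]]; apply: X_nonconst; exists c.
have mXc : measurable (X @^-1` [set c]) by rewrite -[X @^-1` _]setTI; exact: mX.
apply/eqP; rewrite eq_le probability_le1 //=.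
have <- : P (~` N) = 1%E by rewrite probability_setC // PN0 sube0.
apply: le_measure; rewrite ?inE //; first exact: measurableC.
move=> w Nw; apply: contra_notP Nw => /eqP Xwc; apply: sN => /= /(_ Logic.I) [].
by apply/eqP; rewrite gt_eqF // psi_gt0.
Qed.

(* Since [X] and [1/X] have the same law, [E g(X)] is half of
   [E (g(X) + g(1/X))], whose integrand is positive off [X = 1]. *)
Lemma Rintegral_gt0_recip_sum (g : R -> R) :
  measurable_fun (`]0, +oo[ : set R) g ->
  P.-integrable setT (fun w => (g (X w))%:E) ->
  g 1 = 0 -> (forall x, 1 < x -> 0 < g x + g x^-1) ->
  0 < \int[P]_w g (X w).
Proof.
move=> mg ig g1 g_sum.
pose Y w := (X w)^-1.
have mY : measurable_fun setT Y.
  apply: (@measurable_comp _ _ _ _ _ _ (`]0, +oo[ : set R)) => //.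
  - by move=> _ [w _ <-]; rewrite /= in_itv /= andbT.
  - by apply: continuous_measurable_pos => x x0; apply: inv_continuous; rewrite gt_eqF.
pose phi := g \_ (`]0, +oo[ : set R).
have mphi : measurable_fun setT phi by apply/(measurable_restrictT _ _).1.
have phiE y : 0 < y -> phi y = g y.
  by move=> y0; rewrite /phi patchE mem_set //= in_itv /= andbT.
have phiXE : (fun w => (phi (X w))%:E) = (fun w => (g (X w))%:E).
  by apply/funext => w; rewrite phiE.
have phiYE : (fun w => (phi (Y w))%:E) = (fun w => (g (Y w))%:E).
  by apply/funext => w; rewrite phiE // invr_gt0.
have [iY intXY] : P.-integrable setT (fun w => (g (Y w))%:E) /\
    (\int[P]_(w in setT) (g (X w))%:E = \int[P]_(w in setT) (g (Y w))%:E)%E.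
  by rewrite -phiXE -phiYE; apply: integral_eq_in_law; rewrite ?phiXE.
have sum_gt0 x : 0 < x -> x != 1 -> 0 < g x + g x^-1.
  move=> x0; have [x1|x1|->] := ltgtP x 1; rewrite ?eqxx // => _; last exact: g_sum.
  by rewrite -[in g x](invrK x) addrC; apply: g_sum; rewrite invf_gt1.
have sum_ge0 x : 0 < x -> 0 <= g x + g x^-1.
  by move=> x0; have [->|x1] := eqVneq x 1; [rewrite invr1 g1 addr0|exact/ltW/sum_gt0].
have : 0 < \int[P]_w (g (X w) + g (Y w)).
  apply: (@Rintegral_gt0_off_level _ 1 (integrableD _ ig iY)) => // w.
    exact: sum_ge0.
  exact: sum_gt0.
by rewrite RintegralD // /Rintegral -intXY -mulr2n pmulrn_lgt0.
Qed.

Lemma Rintegral_lt0_recip_sum (g : R -> R) :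
  measurable_fun (`]0, +oo[ : set R) g ->
  P.-integrable setT (fun w => (g (X w))%:E) ->
  g 1 = 0 -> (forall x, 1 < x -> g x + g x^-1 < 0) ->
  \int[P]_w g (X w) < 0.
Proof.
move=> mg ig g1 g_sum; rewrite -oppr_gt0 -mulN1r -RintegralZl //.
apply: (Rintegral_gt0_recip_sum (g := fun x => -1 * g x)).
- exact: measurable_funM (measurable_cst _) mg.
- rewrite (_ : (fun w => _) = (fun w => (-1)%:E * (g (X w))%:E)%E).
    exact: integrableZl.
  by apply/funext => w; rewrite EFinM.
- by rewrite g1 mulr0.
- by move=> x x1; rewrite -mulrDr mulN1r oppr_gt0 g_sum.
Qed.

End ReciprocalLaw.

Lemma lt_integral_addr (R : realType) (d : measure_display) (T : measurableType d)
    (mu : {measure set T -> \bar R}) (D : set T) (u v c : T -> R) :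
  measurable D -> mu.-integrable D (fun x => (u x)%:E) ->
  mu.-integrable D (fun x => (v x)%:E) -> mu.-integrable D (fun x => (c x)%:E) ->
  \int[mu]_(x in D) u x < \int[mu]_(x in D) v x ->
  (\int[mu]_(x in D) (u x + c x)%:E < \int[mu]_(x in D) (v x + c x)%:E)%E.
Proof.
move=> mD iu iv ic uv; rewrite !integralD_EFin //.
rewrite -(fineK (integrable_fin_num mD iu)) -(fineK (integrable_fin_num mD iv)).
by rewrite -(fineK (integrable_fin_num mD ic)) -!EFinD lte_fin ltrD2r.
Qed.

Lemma scale1 (R : realType) (G : dist R) : scale G 1 = G.
Proof. by apply/funext => A; congr G; apply/seteqP; split => y /=; rewrite mul1r. Qed.

Section ScaleFamilyLoss.
Context (R : realType) (D : set (dist R)) (l : dist R -> R -> R) (h : R -> R).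
Variable G : dist R.
Hypotheses (dom : loss_domain D l) (DG : D G).
Hypotheses (sym : div_symmetric D l) (resc : div_rescalable D l h).

Lemma divg_scale s t : 0 < s -> 0 < t ->
  divg l (scale G s) (scale G t) = h t * divg l (scale G (s / t)) G.
Proof. by move=> s0 t0; rewrite resc.2. Qed.

Lemma divg_scale1 : divg l (scale G 1) G = 0.
Proof. by rewrite scale1 /divg subrr. Qed.

Lemma divg_scale_recip s : 0 < s ->
  divg l (scale G s) G = h s * divg l (scale G s^-1) G.
Proof.
move=> s0; have [_ Dscale _] := dom.
rewrite sym //; last exact: Dscale.
by have := divg_scale ltr01 s0; rewrite scale1 div1r.
Qed.

End ScaleFamilyLoss.

Section ExpectedLoss.
Context (R : realType) (l : dist R -> R -> R) (G : dist R).
Context (d : measure_display) (Omega : measurableType d).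
Variables (P : probability Omega R) (X : Omega -> R).
Hypothesis eloss_int : forall s, 0 < s ->
  P.-integrable setT (fun w => (eloss l (scale G s) (scale G (X w)))%:E).
Hypothesis divg_int : forall s, 0 < s ->
  P.-integrable setT (fun w => (divg l (scale G s) (scale G (X w)))%:E).

(* The expected losses differ from the expected divergences by the common
   term [E l(G_X, G_X)]. *)
Lemma lt_expected_eloss s t : 0 < s -> 0 < t ->
  \int[P]_w divg l (scale G s) (scale G (X w)) <
    \int[P]_w divg l (scale G t) (scale G (X w)) ->
  (\int[P]_(w in setT) (eloss l (scale G s) (scale G (X w)))%:E <
    \int[P]_(w in setT) (eloss l (scale G t) (scale G (X w)))%:E)%E.
Proof.
move=> s0 t0 lt_st.
pose c w := eloss l (scale G (X w)) (scale G (X w)).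
have ic : P.-integrable setT (fun w => (c w)%:E).
  rewrite (_ : (fun w => _) = (fun w => (eloss l (scale G 1) (scale G (X w)))%:E
      - (divg l (scale G 1) (scale G (X w)))%:E)%E).
    by apply: integrableB => //; [exact: eloss_int|exact: divg_int].
  by apply/funext => w; rewrite -EFinB /divg opprB addrCA subrr addr0.
have elossE r : (fun w => (eloss l (scale G r) (scale G (X w)))%:E) =
    (fun w => (divg l (scale G r) (scale G (X w)) + c w)%:E).
  by apply/funext => w; rewrite /divg subrK.
by rewrite !elossE; apply: lt_integral_addr => //; exact: divg_int.
Qed.

End ExpectedLoss.

Theorem theorem4 (R : realType)
  (D : set (dist R)) (l : dist R -> R -> R) (h : R -> R)
  (G : probability R R)
  (dO : measure_display) (Omega : measurableType dO) (P : probability Omega R)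
  (X : Omega -> R) :
  loss_domain D l ->
  D (G : dist R) ->
  div_symmetric D l ->
  div_rescalable D l h ->
  (* [X] is sigma_test *)
  measurable_fun [set: Omega] X ->
  (forall w, 0 < X w) ->
  ~ (exists c : R, P (X @^-1` [set c]) = 1%E) ->
  (forall A : set R, measurable A ->
     P (X @^-1` A) = P ((fun w => (X w)^-1) @^-1` A)) ->
  (forall s, 0 < s ->
     P.-integrable [set: Omega]
       (fun w => (eloss l (scale G s) (scale G (X w)))%:E)) ->
  let f := fun s => divg l (scale G s) G in
  (forall x, 0 < x -> derivable f x 1) ->
  (forall x, 0 < x -> derivable h x 1) ->
  (forall s, 0 < s -> s != 1 -> 0 < f s) ->
  let q := fun x => (h x - 1) / f x in
  (forall x, 1 < x -> derivable q x 1) ->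
  (forall s, 0 < s ->
     P.-integrable [set: Omega]
       (fun w => (divg l (scale G s) (scale G (X w)))%:E)) ->
  let Ed := fun s => fine (\int[P]_(w in [set: Omega])
                       (divg l (scale G s) (scale G (X w)))%:E)%E in
  derivable Ed 1 1 ->
  P.-integrable [set: Omega]
    (fun w => (derive1 (fun s => divg l (scale G s) (scale G (X w))) 1)%:E) ->
  derive1 Ed 1 = fine (\int[P]_(w in [set: Omega])
                   ((derive1 (fun s => divg l (scale G s) (scale G (X w))) 1)%:E))%E ->
  ((forall x, 1 < x -> 0 < derive1 q x) ->
     exists sstar, 0 < sstar /\ sstar < 1 /\
       (\int[P]_(w in [set: Omega]) (eloss l (scale G sstar) (scale G (X w)))%:E
        < \int[P]_(w in [set: Omega]) (eloss l G (scale G (X w)))%:E)%E) /\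
  ((forall x, 1 < x -> derive1 q x < 0) ->
     exists sstar, 1 < sstar /\
       (\int[P]_(w in [set: Omega]) (eloss l (scale G sstar) (scale G (X w)))%:E
        < \int[P]_(w in [set: Omega]) (eloss l G (scale G (X w)))%:E)%E).
Proof.
move=> dom DG sym resc mX X_gt0 X_nonconst X_law eloss_int f df dh f_gt0 q _
  divg_int Ed dEd islope EdE.
have f_recip s : 0 < s -> f s = h s * f s^-1.
  exact: (divg_scale_recip dom DG sym resc).
pose g := unit_slope f h.
have slopeE w : derive1 (fun s => divg l (scale G s) (scale G (X w))) 1 = g (X w).
  apply: derive1_scaled_at1 (X_gt0 w) _ _; last by apply: df; rewrite invr_gt0.
  by move=> s s0; exact: (divg_scale DG resc s0 (X_gt0 w)).
have {}EdE : derive1 Ed 1 = \int[P]_w g (X w).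
  by rewrite EdE; congr fine; apply: eq_integral => w _; rewrite slopeE.
have ig : P.-integrable setT (fun w => (g (X w))%:E).
  by under eq_fun do rewrite -slopeE.
have mg := measurable_unit_slope df dh.
have g1 : g 1 = 0 by apply: unit_slope1 => //; exact: divg_scale1.
have sum_sgn x : 1 < x -> exists2 c, 0 < c & g x + g x^-1 = c * derive1 q x.
  exact: (unit_slope_recip_sum_pmul f_recip df dh f_gt0 resc.1).
have lower_loss s : 0 < s -> Ed s < Ed 1 ->
  (\int[P]_(w in [set: Omega]) (eloss l (scale G s) (scale G (X w)))%:E
    < \int[P]_(w in [set: Omega]) (eloss l G (scale G (X w)))%:E)%E.
  move=> s0 lt.
  by have := lt_expected_eloss eloss_int divg_int s0 ltr01 lt; rewrite scale1.
split => q_sgn.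
- have : 0 < derive1 Ed 1.
    rewrite EdE; apply: (Rintegral_gt0_recip_sum mX X_gt0 X_nonconst X_law) => // x x1.
    by have [c c0 ->] := sum_sgn x x1; rewrite mulr_gt0 ?q_sgn.
  move=> /(derive1_gt0_descent dEd)[s [s0 s1 lt]]; rewrite subrr in s0.
  by exists s; split => //; split => //; exact: lower_loss.
- have : derive1 Ed 1 < 0.
    rewrite EdE; apply: (Rintegral_lt0_recip_sum mX X_gt0 X_nonconst X_law) => // x x1.
    by have [c c0 ->] := sum_sgn x x1; rewrite pmulr_rlt0 ?q_sgn.
  move=> /(derive1_lt0_descent dEd)[s [s1 lt]].
  by exists s; split => //; apply: lower_loss => //; exact: lt_trans s1.
Qed.
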